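(* Let $q$ be a prime power and $n\ge 2$ an integer. The matroid $\widehat{\mathrm{PG}}(n-1,q)$ is $\mathrm{GF}(q)$-regular, i.e. it is representable over every field having $\mathrm{GF}(q)$ as a proper subfield.
   Context: Let $\mathbb F$ be a field with a $\mathrm{GF}(q)$-subfield, and let $B$ be a $\mathrm{GF}(q)$-matrix with $n+1$ rows whose columns (indexed by $E(N)$) represent $N\cong \mathrm{PG}(n,q)$. Let $L_0$ be a line of $N$ and $v\in\mathrm{col}_{\mathbb F}(B[L_0])$ a nonzero vector not parallel to any column of $B[L_0]$. Let $B^+$ be obtained from $B$ by appending a new column $e$ equal to $v$. Then $\widehat{\mathrm{PG}}(n-1,q)$ denotes any matroid isomorphic to the rank-$n$ matroid $\mathrm{si}(\tilde M(B^+)/e)$, where $\tilde M(B^+)$ is the matroid represented by the columns of $B^+$ and $\mathrm{si}$ denotes simplification; this is determined up to isomorphism by $n$ and $q$ (it is the principal extension of a line of $\mathrm{PG}(n,q)$ followed by contraction of the new element and simplification). *)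

From HB Require Import structures.
From mathcomp Require Import all_boot all_order all_algebra all_field.
Set Implicit Arguments. Unset Strict Implicit. Unset Printing Implicit Defensive.
Import GRing.Theory.
Local Open Scope ring_scope.

(* A "matroid" is given here by its independence predicate on subsets of a
   finite type; its ground set is a separate {set T} where relevant. *)

(** Independence in the vector matroid of a family g : T -> 'rV[F]_d:
    X is independent iff the vectors (g x)_{x in X} are linearly independent
    (in particular pairwise distinct). *)
Definition vec_indep (T : finType) (F : fieldType) (d : nat)
  (g : T -> 'rV[F]_d) (X : {set T}) : bool :=
  free [seq g x | x <- enum X].

(** Contraction M / e (for a loop e, contraction coincides with deletion). *)
Definition contract (T : finType) (indep : {set T} -> bool) (e : T)
  (X : {set T}) : bool :=
  if indep [set e] then (e \notin X) && indep (e |: X)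
  else (e \notin X) && indep X.

Definition is_loop (T : finType) (indep : {set T} -> bool) (x : T) : bool :=
  ~~ indep [set x].

Definition parallel (T : finType) (indep : {set T} -> bool) (x y : T) : bool :=
  [&& x != y, ~~ is_loop indep x, ~~ is_loop indep y & ~~ indep [set x; y]].

(** S is the ground set of a simplification of the matroid (E, indep):
    S contains exactly one element of each parallel class of non-loops
    (and no loops).  si(M) is (up to isomorphism) the restriction M|S. *)
Definition simplification_support (T : finType) (indep : {set T} -> bool)
  (E S : {set T}) : Prop :=
  [/\ S \subset E,
      forall x, x \in S -> ~~ is_loop indep x,
      forall x y, x \in S -> y \in S -> ~~ parallel indep x y &
      forall x, x \in E -> ~~ is_loop indep x ->
        exists2 y, y \in S & (x == y) || parallel indep x y].

Definition representable_on (K : fieldType) (T : finType)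
  (indep : {set T} -> bool) (S : {set T}) : Prop :=
  exists (d : nat) (h : T -> 'rV[K]_d),
    forall X : {set T}, X \subset S -> indep X = vec_indep h X.

Definition has_proper_subfield (Fq : finFieldType) (K : fieldType) : Prop :=
  exists (iotaK : {rmorphism Fq -> K}) (x : K), forall a : Fq, iotaK a != x.

(** The rows of B (indexed by 'I_m) represent PG(n,q) = PG(n, #|Fq|):
    they are nonzero, pairwise non-parallel, and every nonzero vector of
    Fq^(n+1) is parallel to one of them (one row per projective point). *)
Definition represents_PG (Fq : finFieldType) (n m : nat)
  (B : 'M[Fq]_(m, n.+1)) : Prop :=
  [/\ forall j, row j B != 0,
      forall i j, i != j -> ~~ (row i B == row j B)%MS &
      forall u : 'rV[Fq]_(n.+1), u != 0 -> exists j, (u == row j B)%MS].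

Definition is_line (Fq : finFieldType) (n m : nat) (B : 'M[Fq]_(m, n.+1))
  (L0 : {set 'I_m}) : Prop :=
  exists W : 'M[Fq]_(2, n.+1), \rank W = 2 /\
    L0 = [set j | (row j B <= W)%MS].

(** The vectors of B^+ over F: element [Some j] is row j of B (viewed in F),
    the new element e = [None] is v. *)
Definition Bplus (Fq : finFieldType) (F : fieldType) (iota : {rmorphism Fq -> F})
  (n m : nat) (B : 'M[Fq]_(m, n.+1)) (v : 'rV[F]_(n.+1)) (x : option 'I_m)
  : 'rV[F]_(n.+1) :=
  match x with
  | Some j => row j (map_mx iota B)
  | None => v
  end.

Definition PGhat_indep (Fq : finFieldType) (F : fieldType)
  (iota : {rmorphism Fq -> F}) (n m : nat) (B : 'M[Fq]_(m, n.+1))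
  (v : 'rV[F]_(n.+1)) : {set option 'I_m} -> bool :=
  contract (vec_indep (Bplus iota B v)) None.

Definition PGhat_ground (m : nat) : {set option 'I_m} :=
  [set Some j | j : 'I_m].

(* Contracting a point e of the line L0 = <W> maps every other point onto the
   projection away from e.  Since e lies on W but on none of its GF(q)-points,
   e lies in the span of a set X of GF(q)-vectors exactly when all of W does,
   so X is independent in M~(B^+)/e iff its vectors are independent and do not
   span W.  This condition mentions neither e nor F.  Over a field K properly
   containing GF(q), choosing x outside GF(q), the vector w0 + x w1 (for a basis
   w0, w1 of W) has the same two properties, and the projection of B away from
   it represents the same matroid over K. *)

From HB Require Import structures.
From mathcomp Require Import all_boot all_order all_algebra all_field.
Import GRing.Theory.
Local Open Scope ring_scope.

Set Implicit Arguments.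
Unset Strict Implicit.
Unset Printing Implicit Defensive.

Section RowMatrices.
Variable L : fieldType.

Lemma row_free_kerP m N (A : 'M[L]_(m, N)) :
  reflect (forall y : 'rV_m, y *m A = 0 -> y = 0) (row_free A).
Proof.
apply: (iffP idP) => [freeA y yA0 | kerA0].
  by apply: (row_free_inj freeA); rewrite yA0 mul0mx.
rewrite -kermx_eq0; apply/negPn/negP => /rowV0Pn [y /sub_kermxP yA0 y_neq0].
by move/eqP: y_neq0; apply; apply: kerA0.
Qed.

Definition seqmx k N (s : seq 'rV[L]_N) : 'M[L]_(k, N) := \matrix_(i < k) s`_i.

Lemma seqmx_mulmx k N (s : seq 'rV[L]_N) (C : 'M[L]_N) :
  seqmx k [seq w *m C | w <- s] = seqmx k s *m C.
Proof.
apply/row_matrixP => i; rewrite row_mul !rowK.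
have [i_lt | i_ge] := ltnP i (size s); first by rewrite (nth_map 0).
by rewrite !nth_default ?size_map // mul0mx.
Qed.

Lemma memv_span_seqmx N k (s : seq 'rV[L]_N) u : size s = k ->
  (u \in <<s>>)%VS = (u <= seqmx k s)%MS.
Proof.
move=> <-; apply/idP/idP => [u_s | /submxP [y ->]].
  rewrite (coord_span (X := in_tuple s) u_s); apply: summx_sub => i _.
  apply: scalemx_sub; rewrite -[X in (X <= _)%MS](rowK (fun i => s`_i)).
  exact: row_sub.
rewrite mulmx_sum_row; apply: memv_suml => i _; apply: memvZ.
by rewrite rowK; apply: memv_span; apply: mem_nth.
Qed.

Lemma free_seqmx N k (s : seq 'rV[L]_N) : size s = k ->
  free s = row_free (seqmx k s).
Proof.
move=> <-; apply/idP/idP => [/(freeP (X := in_tuple s)) sfree | /row_free_kerP kerS0].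
  apply/row_free_kerP => y yS0; apply/rowP => i; rewrite mxE.
  apply: (sfree (fun i => y 0 i)) => //; rewrite -[RHS]yS0 mulmx_sum_row.
  by apply: eq_bigr => j _; rewrite rowK.
suff : free (in_tuple s) by [].
apply/freeP => c c_s0 i.
have : \row_j c j = 0.
  apply: kerS0; rewrite mulmx_sum_row -[RHS]c_s0.
  by apply: eq_bigr => j _; rewrite rowK mxE.
by move/rowP/(_ i); rewrite !mxE.
Qed.

Lemma row_free_mul_cokermx m N (A : 'M[L]_(m, N)) (u : 'rV[L]_N) : u != 0 ->
  row_free (A *m cokermx u) = ~~ (u <= A)%MS && row_free A.
Proof.
move=> u_neq0; apply/idP/idP => [/row_free_kerP kerAu0 | /andP [uA /row_free_kerP kerA0]].
  apply/andP; split.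
    apply/negP => /submxP [y def_u].
    have y0 : y = 0 by apply: kerAu0; rewrite mulmxA -def_u mulmx_coker.
    by move: u_neq0; rewrite def_u y0 mul0mx eqxx.
  by apply/row_free_kerP => y yA0; apply: kerAu0; rewrite mulmxA yA0 mul0mx.
apply/row_free_kerP => y yAu0.
have /sub_rVP [a def_yA] : (y *m A <= u)%MS by rewrite submxE -mulmxA yAu0.
have [a0 | a_neq0] := eqVneq a 0; first by apply: kerA0; rewrite def_yA a0 scale0r.
case/negP: uA; rewrite -[u](scalerK a_neq0) -def_yA.
by apply: scalemx_sub; apply: submxMl.
Qed.

End RowMatrices.

Definition generic_line_point (Fq : finFieldType) (L : fieldType)
    (iota : {rmorphism Fq -> L}) N (W : 'M[Fq]_(2, N)) (u : 'rV[L]_N) : Prop :=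
  [/\ u != 0, (u <= map_mx iota W)%MS &
      forall r : 'rV[Fq]_N, r != 0 -> (r <= W)%MS -> ~~ (u <= map_mx iota r)%MS].

Section GenericLinePoint.
Variables (Fq : finFieldType) (L : fieldType) (iota : {rmorphism Fq -> L}).
Variables (N : nat) (W : 'M[Fq]_(2, N)).
Hypothesis rankW : \rank W = 2%N.

Lemma generic_line_point_submxE u k (A : 'M[Fq]_(k, N)) :
  generic_line_point iota W u -> (u <= map_mx iota A)%MS = (W <= A)%MS.
Proof.
case=> u_neq0 uW u_notr; apply/idP/idP => [uA | WA]; last first.
  by apply: submx_trans uW _; rewrite map_submx.
have uC : (u <= map_mx iota (A :&: W))%MS by rewrite map_capmx sub_capmx uA.
set C := (A :&: W)%MS in uC.
have CW : (C <= W)%MS by apply: capmxSr.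
apply/negPn/negP => WA.
(* C is a proper subspace of the plane W, hence (being nonzero) a point of it. *)
have rankC : (\rank C <= 1)%N.
  rewrite leqNgt; apply/negP => rankC2; case/negP: WA.
  have WC : (W <= C)%MS by rewrite -(geq_leqif (mxrank_leqif_sup CW)) rankW.
  exact: submx_trans WC (capmxSl _ _).
have /rowV0Pn [r rC r_neq0] : C != 0.
  apply: contraNneq u_neq0 => C0.
  by move: uC; rewrite C0 map_mx0 submx0.
have Cr : (C <= r)%MS by rewrite -(geq_leqif (mxrank_leqif_sup rC)) rank_rV r_neq0.
case/negP: (u_notr r r_neq0 (submx_trans rC CW)).
by apply: submx_trans uC _; rewrite map_submx.
Qed.

(* With a basis w0, w1 of W, the point w0 + x w1 is generic as soon as x is
   not a value of iota: a multiple of the image of y0 w0 + y1 w1 would force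
   x = iota (y1 / y0). *)
Lemma generic_line_point_exists (x : L) : (forall a : Fq, iota a != x) ->
  exists u, generic_line_point iota W u.
Proof.
move=> x_notFq.
pose w : 'rV[L]_2 := \row_(i < 2) (if val i == 0%N then 1 else x).
have freeW : row_free (map_mx iota W) by rewrite row_free_map /row_free rankW.
exists (w *m map_mx iota W); split; last 2 first.
- exact: submxMl.
- move=> r _ /submxP [y def_r]; apply/negP => /sub_rVP [k wW_kr].
  have /rowP wE : w = k *: map_mx iota y.
    by apply: (row_free_inj freeW); rewrite wW_kr def_r map_mxM scalemxAl.
  have := wE 0; have := wE 1; rewrite !mxE /= => wE1 wE0.
  have y0_neq0 : iota (y 0 0) != 0.
    by apply: contra_eq_neq wE0 => ->; rewrite mulr0 oner_neq0.
  have def_k : k = (iota (y 0 0))^-1 by apply: (mulIf y0_neq0); rewrite mulVf // -wE0.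
  by move: (x_notFq (y 0 1 / y 0 0)); rewrite fmorph_div wE1 def_k mulrC eqxx.
- apply: contraTneq isT => wW0.
  have /rowP/(_ 0) : w = 0 by apply: (row_free_inj freeW); rewrite wW0 mul0mx.
  by rewrite !mxE /= => /eqP; rewrite oner_eq0.
Qed.

End GenericLinePoint.

Lemma generic_line_point_of_PG_line (Fq : finFieldType) (F : fieldType)
    (iota : {rmorphism Fq -> F}) (n m : nat) (B : 'M[Fq]_(m, n.+1))
    (W : 'M[Fq]_(2, n.+1)) (L0 : {set 'I_m}) (v : 'rV[F]_(n.+1)) :
  (forall r : 'rV[Fq]_(n.+1), r != 0 -> exists j, (r == row j B)%MS) ->
  L0 = [set j | (row j B <= W)%MS] -> v != 0 ->
  (exists c : 'I_m -> F, v = \sum_(j in L0) c j *: row j (map_mx iota B)) ->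
  (forall j, j \in L0 -> forall a : F, v != a *: row j (map_mx iota B)) ->
  generic_line_point iota W v.
Proof.
move=> B_points def_L0 v_neq0 [c def_v] v_notBj; split=> //.
  rewrite def_v; apply: summx_sub => j; rewrite def_L0 inE => jW.
  by apply: scalemx_sub; rewrite -map_row map_submx.
move=> r r_neq0 rW; apply/negP => vr.
have [j /andP [rj jr]] := B_points r r_neq0.
have jL0 : j \in L0 by rewrite def_L0 inE (submx_trans jr rW).
have /sub_rVP [a def_va] : (v <= row j (map_mx iota B))%MS.
  by apply: submx_trans vr _; rewrite -map_row map_submx.
by move: (v_notBj j jL0 a); rewrite def_va eqxx.
Qed.

Section LineContraction.
Variables (Fq : finFieldType) (n m : nat) (B : 'M[Fq]_(m, n.+1)).

(* The value at [None] is irrelevant: these are only used on sets avoiding e. *)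
Definition point_row (x : option 'I_m) : 'rV[Fq]_(n.+1) :=
  if x is Some j then row j B else 0.

Definition points_mx (l : seq (option 'I_m)) : 'M[Fq]_(size l, n.+1) :=
  \matrix_(i < size l) point_row (nth None l i).

Variables (L : fieldType) (iota : {rmorphism Fq -> L}) (u : 'rV[L]_(n.+1)).

Lemma seqmx_Bplus l : None \notin l ->
  seqmx (size l) (map (Bplus iota B u) l) = map_mx iota (points_mx l).
Proof.
move=> l_noNone; apply/row_matrixP => i; rewrite rowK -map_row rowK.
rewrite (nth_map None) //; case def_x: (nth None l i) => [j|] /=.
  by rewrite map_row.
by move: l_noNone; rewrite -def_x mem_nth.
Qed.

Lemma vec_indep_Bplus_setU1 (X : {set option 'I_m}) : None \notin X ->
  vec_indep (Bplus iota B u) (None |: X) =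
  ~~ (u <= map_mx iota (points_mx (enum X)))%MS &&
  row_free (map_mx iota (points_mx (enum X))).
Proof.
move=> X_noNone; rewrite /vec_indep.
have enumX : perm_eq (enum (None |: X)) (None :: enum X).
  apply: uniq_perm; rewrite /= ?mem_enum ?X_noNone ?enum_uniq // => y.
  by rewrite mem_enum in_setU1 in_cons mem_enum.
rewrite (perm_free (perm_map _ enumX)) /= free_cons.
have size_Bplus := size_map (Bplus iota B u) (enum X).
rewrite (memv_span_seqmx _ size_Bplus) (free_seqmx size_Bplus).
by rewrite seqmx_Bplus ?mem_enum.
Qed.

Lemma vec_indep_Bplus_cokermx (X : {set option 'I_m}) : None \notin X -> u != 0 ->
  vec_indep (fun x => Bplus iota B u x *m cokermx u) X =
  ~~ (u <= map_mx iota (points_mx (enum X)))%MS &&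
  row_free (map_mx iota (points_mx (enum X))).
Proof.
move=> X_noNone u_neq0; rewrite /vec_indep.
rewrite (map_comp (mulmx^~ (cokermx u)) (Bplus iota B u)).
rewrite (free_seqmx (size_map _ _)) seqmx_mulmx size_map.
by rewrite seqmx_Bplus ?mem_enum // row_free_mul_cokermx.
Qed.

End LineContraction.

Theorem lemma4p3
  (q : nat) (Fq : finFieldType) (hq : #|Fq| = q)
  (n : nat) (hn : (2 <= n)%N)
  (F : fieldType) (iota : {rmorphism Fq -> F})
  (m : nat) (B : 'M[Fq]_(m, n.+1)) (hB : represents_PG B)
  (L0 : {set 'I_m}) (hL0 : is_line B L0)
  (v : 'rV[F]_(n.+1)) (hv0 : v != 0)
  (hvspan : exists c : 'I_m -> F,
      v = \sum_(j in L0) c j *: row j (map_mx iota B))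
  (hvpar : forall j, j \in L0 -> forall a : F, v != a *: row j (map_mx iota B))
  (S : {set option 'I_m})
  (hS : simplification_support (PGhat_indep iota B v) (PGhat_ground m) S)
  (K : fieldType) (hK : has_proper_subfield Fq K) :
  representable_on K (PGhat_indep iota B v) S.
Proof.
case: hB => _ _ B_points; case: hL0 => W [rankW def_L0].
case: hS => S_ground _ _ _; case: hK => iotaK [x x_notFq].
have v_generic := generic_line_point_of_PG_line B_points def_L0 hv0 hvspan hvpar.
have [uK uK_generic] := generic_line_point_exists rankW x_notFq.
exists n.+1, (fun z => Bplus iotaK B uK z *m cokermx uK) => X XS.
have X_noNone : None \notin X.
  by apply/negP => /(subsetP XS) /(subsetP S_ground) /imsetP [].
have [uK_neq0 _ _] := uK_generic.
have None_indep : vec_indep (Bplus iota B v) [set None].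
  by rewrite /vec_indep enum_set1 /= seq1_free hv0.
rewrite /PGhat_indep /contract None_indep X_noNone /=.
rewrite vec_indep_Bplus_setU1 // vec_indep_Bplus_cokermx //.
rewrite (generic_line_point_submxE rankW _ v_generic).
by rewrite (generic_line_point_submxE rankW _ uK_generic) !row_free_map.
Qed.
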